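(* Let $\mathsf M=\mathrm{diag}(M_1,\dots,M_N)$ and $\bar{\mathsf M}=\mathrm{diag}(\bar M_1,\dots,\bar M_N)$ be real diagonal matrices, $|\alpha\rangle,|\bar\alpha\rangle$ real $N$-columns, $\langle a|,\langle\bar a|$ real $N$-rows, and let $\mathsf A,\bar{\mathsf A}$ be real $N\times N$ matrices satisfying $$\bar{\mathsf M}\mathsf A-\mathsf A\mathsf M=|\alpha\rangle\langle a|,\qquad \mathsf M\bar{\mathsf A}-\bar{\mathsf A}\bar{\mathsf M}=|\bar\alpha\rangle\langle\bar a|.$$ For a real $\zeta$ with $\zeta\neq\pm M_j$, $\zeta\neq\pm\bar M_j$ for all $j$, let $\mathsf H_\zeta=(\mathsf M-\zeta)(\mathsf M+\zeta)^{-1}$ and $\bar{\mathsf H}_\zeta=(\bar{\mathsf M}+\zeta)(\bar{\mathsf M}-\zeta)^{-1}$, and for a finite set $X$ of such parameters let $\mathsf H_X=\prod_{\xi\in X}\mathsf H_\xi$, $\bar{\mathsf H}_X=\prod_{\xi\in X}\bar{\mathsf H}_\xi$ and $$\tau_X=\det\big(\mathsf 1+\mathsf A\mathsf H_X\,\bar{\mathsf A}\bar{\mathsf H}_X\big),\qquad \tau=\tau_\emptyset=\det(\mathsf 1+\mathsf A\bar{\mathsf A}).$$ Then for all pairwise distinct such parameters $\alpha,\beta,\gamma$, $$\tau\,\tau_{\{\alpha,\beta,\gamma\}}=\Gamma_{\alpha,\beta\gamma}\,\tau_{\{\alpha\}}\tau_{\{\beta,\gamma\}}+\Gamma_{\beta,\alpha\gamma}\,\tau_{\{\beta\}}\tau_{\{\alpha,\gamma\}}+\Gamma_{\gamma,\alpha\beta}\,\tau_{\{\gamma\}}\tau_{\{\alpha,\beta\}},$$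 where $\Gamma_{\xi,\eta\zeta}=\dfrac{(\xi+\eta)(\xi+\zeta)}{(\xi-\eta)(\xi-\zeta)}$.
   Context: $\mathsf 1$ is the $N\times N$ identity matrix and $\mathsf M-\zeta$ means $\mathsf M-\zeta\mathsf 1$. The matrices $\mathsf H_\xi$, $\bar{\mathsf H}_\xi$ are diagonal, hence commute with each other. This equation is called the Miwa (discrete BKP) equation. *)

From HB Require Import structures.
From mathcomp Require Import all_boot all_order all_algebra.
Set Implicit Arguments. Unset Strict Implicit. Unset Printing Implicit Defensive.
Import Order.TTheory GRing.Theory Num.Theory.
Local Open Scope ring_scope.

Definition Hmat (R : fieldType) (N : nat) (M : 'M[R]_N) (z : R) : 'M[R]_N :=
  (M - z%:M) *m invmx (M + z%:M).

Definition Hbmat (R : fieldType) (N : nat) (Mb : 'M[R]_N) (z : R) : 'M[R]_N :=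
  (Mb + z%:M) *m invmx (Mb - z%:M).

(* H_X = prod_{xi in X} H_xi  (factors commute; X given as a list) *)
Definition HX (R : fieldType) (N : nat) (M : 'M[R]_N) (X : seq R) : 'M[R]_N :=
  \big[mulmx/1%:M]_(x <- X) Hmat M x.

Definition HbX (R : fieldType) (N : nat) (Mb : 'M[R]_N) (X : seq R) : 'M[R]_N :=
  \big[mulmx/1%:M]_(x <- X) Hbmat Mb x.

Definition tauX (R : fieldType) (N : nat) (M Mb A Ab : 'M[R]_N) (X : seq R) : R :=
  \det (1%:M + A *m HX M X *m Ab *m HbX Mb X).

Definition Gam (R : fieldType) (x y z : R) : R :=
  ((x + y) * (x + z)) / ((x - y) * (x - z)).

Definition admissible (R : fieldType) (N : nat) (m mb : 'rV[R]_N) (z : R) : Prop :=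
  forall j : 'I_N, z <> m 0 j /\ z <> - m 0 j /\ z <> mb 0 j /\ z <> - mb 0 j.

(* For a list X of admissible parameters, H_X and Hbar_X are diagonal with
   entries h_X(M_j) and h_X(Mbar_i)^-1, where h_X(t) = prod_(xi in X) (t - xi)/(t + xi).
   Since A solves a rank-one Sylvester equation, A_ij = alpha_i a_j / (Mbar_i - M_j),
   and the partial fraction expansion of h_X shows that Hbar_X A H_X - A = U V has
   rank |X|.  When 1 + A Abar is invertible, the matrix determinant lemma turns
   tau_X into det(1 + A Abar) times an |X| x |X| determinant whose entries are
   values of psi(c) - phi(s) + phi(s) psi(c) - P(s) Q(c), where phi, psi, P, Q are
   bilinear expressions in S = Abar (1 + A Abar)^-1; this kernel comes from the
   Sylvester equation satisfied by S.  For |X| <= 3 the Miwa relation between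
   these small determinants is an identity of rational functions.  Finally,
   replacing 1 by lambda makes both sides polynomials in lambda that agree
   whenever lambda det(lambda + A Abar) <> 0, hence everywhere, in particular at 1. *)

From HB Require Import structures.
From mathcomp Require Import all_boot all_order all_algebra.
From mathcomp Require Import ring.
Set Implicit Arguments. Unset Strict Implicit. Unset Printing Implicit Defensive.
Import Order.TTheory GRing.Theory Num.Theory.
Local Open Scope ring_scope.

Section PartialFractions.
Variable F : fieldType.
Implicit Types (Q : seq F) (g : {poly F}).

Lemma size_prod_XsubC_rem (I : eqType) (r : seq I) (f : I -> F) i :
  i \in r -> uniq r -> size (\prod_(j <- r | j != i) ('X - (f j)%:P)) = size r.
Proof.
move=> ir ur; rewrite -big_filter -rem_filter // size_prod_XsubC size_rem //.
by case: r ir {ur}.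
Qed.

Lemma size_monicB (p q : {poly F}) : p \is monic -> q \is monic ->
  size p = size q -> (size (p - q)%R < size p)%N.
Proof.
move=> mp mq spq; have sp : (0 < size p)%N by rewrite size_poly_gt0 monic_neq0.
rewrite -(prednK sp) ltnS; apply/leq_sizeP => j; rewrite leq_eqVlt => /orP[/eqP<-|lt_j].
  by rewrite coefB -lead_coefE spq -lead_coefE (monicP mp) (monicP mq) subrr.
rewrite nth_default //; apply: leq_trans (size_polyD _ _) _.
by rewrite size_polyN -spq maxnn -(prednK sp).
Qed.

Lemma partial_fractions Q g s : uniq Q -> (size g <= size Q)%N -> s \notin Q ->
  g.[s] / \prod_(q <- Q) (s - q)
  = \sum_(q <- Q) g.[q] / \prod_(q' <- Q | q' != q) (q - q') / (s - q).
Proof.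
move=> uQ size_g sQ.
have den_neq0 q : \prod_(q' <- Q | q' != q) (q - q') != 0.
  by rewrite prodf_seq_neq0; apply/allP => q' _; apply/implyP; rewrite subr_eq0 eq_sym.
pose e q := \prod_(q' <- Q | q' != q) ('X - q'%:P).
have e_node q q' : q \in Q -> q' \in Q ->
    (e q).[q'] = (q' == q)%:R * \prod_(q'' <- Q | q'' != q) (q - q'').
  move=> qQ q'Q; rewrite horner_prod; have [->|q'q] := eqVneq q' q.
    by rewrite mul1r; apply: eq_bigr => q'' _; rewrite hornerXsubC.
  rewrite mul0r -big_filter (bigD1_seq q') /= ?hornerXsubC ?subrr ?mul0r //.
    by rewrite mem_filter q'q.
  exact: filter_uniq.
pose L := \sum_(q <- Q) (g.[q] / \prod_(q' <- Q | q' != q) (q - q')) *: e q.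
have gL : g = L.
  apply/eqP; rewrite -subr_eq0; apply/eqP; apply: (roots_geq_poly_eq0 (rs := Q)) => //.
  - apply/allP => q qQ; rewrite /root hornerD hornerN horner_sum (bigD1_seq q) //=.
    rewrite [X in (_ *: _).[_] + X]big1_seq => [|q' /andP[q'q q'Q]]; last first.
      by rewrite hornerZ e_node // eq_sym (negPf q'q) mul0r mulr0.
    by rewrite addr0 hornerZ e_node // eqxx mul1r divfK // subrr.
  - apply: leq_trans (size_polyD _ _) _; rewrite size_polyN geq_max size_g.
    apply: leq_trans (size_sum _ _ _) _; apply/bigmax_leqP_seq => q qQ _.
    by apply: leq_trans (size_scale_leq _ _) _; rewrite (size_prod_XsubC_rem id).
rewrite {1}gL horner_sum mulr_suml big_seq [RHS]big_seq; apply: eq_bigr => q qQ.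
rewrite hornerZ horner_prod [X in _ / X](bigD1_seq q) //=.
have sq : s - q != 0 by rewrite subr_eq0; apply: contraNneq sQ => ->.
have P0 : \prod_(q' <- Q | q' != q) (s - q') != 0.
  rewrite prodf_seq_neq0; apply/allP => q' q'Q; apply/implyP => _.
  by rewrite subr_eq0; apply: contraNneq sQ => ->.
under [X in _ * X / _]eq_bigr do rewrite hornerXsubC.
by field; rewrite sq P0 den_neq0.
Qed.
End PartialFractions.

Section HFunction.
Variables (F : fieldType) (X : seq F).
Hypothesis uX : uniq X.

Definition hfun (t : F) := \prod_(xi <- X) ((t - xi) / (t + xi)).

Definition hfun_res (x : F) :=
  - \prod_(xi <- X) (x + xi) / \prod_(xi <- X | xi != x) (x - xi).

Definition hfunV_coef (x y : F) :=
  - \prod_(xi <- X | xi != y) (x + xi)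
  / (\prod_(xi <- X | xi != x) (x - xi) * \prod_(xi <- X | xi != y) (y - xi)).

Lemma hfun_expand t : (forall xi, xi \in X -> t + xi != 0) ->
  hfun t = 1 + \sum_(x <- X) hfun_res x / (t + x).
Proof.
move=> tX; pose Q := map -%R X.
have uQ : uniq Q by rewrite map_inj_uniq //; apply: oppr_inj.
have tQ : t \notin Q.
  by apply/mapP => -[xi xiX t_xi]; move: (tX xi xiX); rewrite t_xi addNr eqxx.
have prodQ u : \prod_(q <- Q) (u - q) = \prod_(xi <- X) (u + xi).
  by rewrite big_map; apply: eq_bigr => xi _; rewrite opprK.
pose g := \prod_(xi <- X) ('X - xi%:P) - \prod_(q <- Q) ('X - q%:P).
have size_g : (size g <= size Q)%N.
  rewrite size_map -ltnS -(size_prod_XsubC X id).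
  by apply: size_monicB; rewrite ?monic_prod_XsubC // !size_prod_XsubC size_map.
have g_eval u : g.[u] = \prod_(xi <- X) (u - xi) - \prod_(xi <- X) (u + xi).
  rewrite hornerD hornerN !horner_prod -prodQ.
  by congr (_ - _); apply: eq_bigr => *; rewrite hornerXsubC.
have -> : hfun t = 1 + g.[t] / \prod_(q <- Q) (t - q).
  have B0 : \prod_(xi <- X) (t + xi) != 0.
    by rewrite prodf_seq_neq0; apply/allP => xi /tX ->.
  by rewrite g_eval prodQ mulrBl divff // addrC subrK /hfun prodf_div.
rewrite partial_fractions // big_map; congr (_ + _); rewrite !big_seq; apply: eq_bigr => x xX.
rewrite opprK g_eval [in X in _ - X](bigD1_seq x) //= addNr mul0r subr0; congr (_ / _).
rewrite big_map [X in _ / X](eq_bigl (fun xi => xi != x)) => [|xi]; last by rewrite /= eqr_opp.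
rewrite /hfun_res (bigD1_seq x) //= [in RHS](bigD1_seq x) //= -mulrA -prodf_div.
rewrite -mulNr -opprD -[RHS]mulrA -prodf_div; congr (_ * _); apply: eq_bigr => xi _.
by rewrite -opprD opprK [- x + _]addrC -opprB divrNN.
Qed.

Lemma hfunB s t :
  (forall xi, xi \in X -> s + xi != 0) -> (forall xi, xi \in X -> t + xi != 0) ->
  hfun t - hfun s = (s - t) * \sum_(x <- X) hfun_res x / ((s + x) * (t + x)).
Proof.
move=> sX tX; rewrite (hfun_expand tX) (hfun_expand sX) opprD addrACA subrr add0r.
rewrite -sumrB mulr_sumr !big_seq; apply: eq_bigr => x xX.
by field; rewrite sX ?tX.
Qed.

Lemma hfunV_expand x s : x \in X ->
  (forall xi, xi \in X -> s - xi != 0) -> (forall xi, xi \in X -> s + xi != 0) ->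
  (hfun s)^-1 * hfun_res x / (s + x)
  = \sum_(y <- X) hfunV_coef x y * \prod_(xi <- X) (y + xi) / (s - y).
Proof.
move=> xX sBX sDX.
pose g := hfun_res x *: \prod_(xi <- X | xi != x) ('X - (- xi)%:P).
have size_g : (size g <= size X)%N.
  by apply: leq_trans (size_scale_leq _ _) _; rewrite (size_prod_XsubC_rem _ xX uX).
have g_eval u : g.[u] = hfun_res x * \prod_(xi <- X | xi != x) (u + xi).
  by rewrite hornerZ horner_prod; under eq_bigr do rewrite hornerXsubC opprK.
have sX : s \notin X by apply/negP => sX; move: (sBX s sX); rewrite subrr eqxx.
have -> : (hfun s)^-1 * hfun_res x / (s + x) = g.[s] / \prod_(xi <- X) (s - xi).
  rewrite g_eval /hfun -prodfV; under eq_bigr do rewrite invf_div.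
  rewrite prodf_div (bigD1_seq x) //=.
  have B0 : \prod_(xi <- X) (s - xi) != 0.
    by rewrite prodf_seq_neq0; apply/allP => xi /sBX ->.
  by field; rewrite B0 sDX.
rewrite partial_fractions // !big_seq; apply: eq_bigr => y yX; congr (_ / _).
rewrite g_eval /hfun_res /hfunV_coef (bigD1_seq y) //= [in RHS](bigD1_seq x) //=.
by rewrite !invfM; ring.
Qed.
End HFunction.

Section ReducedTau.
Variable F : fieldType.
Implicit Types (X : seq F) (K : F -> F -> F).

Definition miwa_kernel (phi psi P Q : F -> F) (s c : F) :=
  psi c - phi s + phi s * psi c - P s * Q c.

(* The factor X`_l + y of \prod_(xi <- X) (y + xi) is absorbed by the kernel
   (cauchy_entry_kernel): it may vanish, so it cannot be divided out. *)
Definition reduced_entry X K (l l' : nat) :=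
  \sum_(y <- X) hfunV_coef X X`_l' y * \prod_(xi <- X | xi != X`_l) (y + xi) * K X`_l y.

Definition reduced_tau X K :=
  \det (1%:M + \matrix_(l < size X, l' < size X) reduced_entry X K l l').
End ReducedTau.

Section SmallDeterminants.
Variable R : comPzRingType.
Implicit Types f : nat -> nat -> R.

Lemma det_mx1_nat f : \det (\matrix_(i < 1, j < 1) f i j) = f 0 0.
Proof. by rewrite det_mx11 mxE. Qed.

Lemma det_mx2_nat f :
  \det (\matrix_(i < 2, j < 2) f i j) = f 0 0 * f 1 1 - f 0 1 * f 1 0.
Proof.
rewrite (expand_det_row _ 0) !big_ord_recl big_ord0 /cofactor !det_mx11 !mxE /=.
by rewrite /bump /=; ring.
Qed.

Lemma det_mx3_nat f :
  \det (\matrix_(i < 3, j < 3) f i j) =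
  f 0 0 * (f 1 1 * f 2 2 - f 1 2 * f 2 1)
  - f 0 1 * (f 1 0 * f 2 2 - f 1 2 * f 2 0)
  + f 0 2 * (f 1 0 * f 2 1 - f 1 1 * f 2 0).
Proof.
rewrite (expand_det_row _ 0) !big_ord_recl big_ord0 /cofactor.
rewrite !(expand_det_row _ 0) !big_ord_recl !big_ord0 /cofactor !det_mx11 !mxE /=.
by rewrite /bump /=; ring.
Qed.

Lemma add1mx_nat k f :
  1%:M + \matrix_(i < k, j < k) f i j = \matrix_(i < k, j < k) ((i == j)%:R + f i j).
Proof. by apply/matrixP => i j; rewrite !mxE. Qed.
End SmallDeterminants.

Lemma reduced_tau_miwa (F : fieldType) (phi psi P Q : F -> F) x y z :
  x != y -> x != z -> y != z ->
  let tau X := reduced_tau X (miwa_kernel phi psi P Q) in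
  tau [:: x; y; z] = Gam x y z * tau [:: x] * tau [:: y; z]
                   + Gam y x z * tau [:: y] * tau [:: x; z]
                   + Gam z x y * tau [:: z] * tau [:: x; y].
Proof.
move=> xy xz yz tau.
have [yx zx zy] : [/\ y != x, z != x & z != y] by split; rewrite eq_sym.
have [xy' xz' yz'] : [/\ x - y != 0, x - z != 0 & y - z != 0] by rewrite !subr_eq0.
rewrite /tau /reduced_tau !add1mx_nat /=.
rewrite (det_mx3_nat (fun i j => (i == j)%:R + reduced_entry _ _ i j)).
rewrite !(det_mx2_nat (fun i j => (i == j)%:R + reduced_entry _ _ i j)).
rewrite !(det_mx1_nat (fun i j => (i == j)%:R + reduced_entry _ _ i j)).
rewrite /reduced_entry /Gam /hfunV_coef /miwa_kernel unlock /=.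
rewrite !eqxx ?(negPf xy, negPf xz, negPf yz, negPf yx, negPf zx, negPf zy) /=.
(* field only shares denominator factors that agree syntactically, so every
   difference of nodes is given a single orientation first. *)
rewrite -(opprB x y) -(opprB x z) -(opprB y z) !invfM !invrN ?mulr1 ?mul1r ?invr1.
by field; rewrite ?xy' ?xz' ?yz' ?oner_neq0.
Qed.

Lemma det_add1_mulmxC (R : comPzRingType) n k (U : 'M[R]_(n, k)) (V : 'M[R]_(k, n)) :
  \det (1%:M + U *m V) = \det (1%:M + V *m U).
Proof.
have E1 : block_mx 1%:M 0 V 1%:M *m block_mx 1%:M (- U) 0 (1%:M + V *m U)
        = block_mx 1%:M (- U) V 1%:M.
  rewrite mulmx_block ?mulmx0 ?mul0mx ?mulmx1 ?mul1mx ?addr0 ?add0r.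
  by rewrite mulmxN addrCA addNr addr0.
have E2 : block_mx (1%:M + U *m V) (- U) 0 1%:M *m block_mx 1%:M 0 V 1%:M
        = block_mx 1%:M (- U) V 1%:M.
  rewrite mulmx_block ?mulmx0 ?mul0mx ?mulmx1 ?mul1mx ?addr0 ?add0r.
  by rewrite mulNmx addrK.
have := congr1 determinant E1; rewrite -E2 !det_mulmx.
by rewrite !det_lblock !det_ublock !det1 !mul1r !mulr1 => ->.
Qed.

Lemma det_add_mulmx (F : fieldType) n k (B : 'M[F]_n) (U : 'M_(n, k)) (W : 'M_(k, n)) :
  B \in unitmx -> \det (B + U *m W) = \det B * \det (1%:M + W *m invmx B *m U).
Proof.
move=> B_unit; have -> : B + U *m W = B *m (1%:M + invmx B *m U *m W).
  by rewrite mulmxDr mulmx1 !mulmxA mulmxV // mul1mx.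
by rewrite det_mulmx det_add1_mulmxC mulmxA.
Qed.

Section DiagonalFactors.
Variables (F : fieldType) (n : nat).
Implicit Types (d : 'rV[F]_n) (X : seq F).

Lemma diag_mx_addC d z : diag_mx d + z%:M = diag_mx (\row_j (d 0 j + z)).
Proof. by apply/matrixP => i j; rewrite !mxE mulrnDl. Qed.

Lemma diag_mx_subC d z : diag_mx d - z%:M = diag_mx (\row_j (d 0 j - z)).
Proof. by apply/matrixP => i j; rewrite !mxE mulrnBl. Qed.

Lemma invmx_diag d :
  (forall j, d 0 j != 0) -> invmx (diag_mx d) = diag_mx (\row_j (d 0 j)^-1).
Proof.
move=> d_neq0; have dV : diag_mx d *m diag_mx (\row_j (d 0 j)^-1) = 1%:M.
  by rewrite mulmx_diag; apply/matrixP => i j; rewrite !mxE mulfV.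
have [d_unit _] := mulmx1_unit dV.
by rewrite -[invmx _]mulmx1 -dV mulmxA mulVmx // mul1mx.
Qed.

Lemma big_mulmx_diag (I : Type) (r : seq I) (d : I -> 'rV[F]_n) :
  \big[mulmx/1%:M]_(i <- r) diag_mx (d i) = diag_mx (\row_j \prod_(i <- r) d i 0 j).
Proof.
elim: r => [|i r IH]; first by apply/matrixP => j j'; rewrite big_nil !mxE big_nil.
by rewrite !big_cons IH mulmx_diag; congr diag_mx; apply/rowP => j; rewrite !mxE big_cons.
Qed.

Lemma HX_diag (m : 'rV[F]_n) X : (forall xi j, xi \in X -> m 0 j + xi != 0) ->
  HX (diag_mx m) X = diag_mx (\row_j hfun X (m 0 j)).
Proof.
move=> mX; rewrite /HX.
rewrite (eq_big_seq (fun xi => diag_mx (\row_j ((m 0 j - xi) / (m 0 j + xi))))).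
  rewrite big_mulmx_diag; congr diag_mx; apply/rowP => j.
  by rewrite !mxE; under eq_bigr do rewrite mxE.
move=> xi xiX; rewrite /Hmat diag_mx_subC diag_mx_addC invmx_diag => [|j]; last first.
  by rewrite mxE mX.
by rewrite mulmx_diag; congr diag_mx; apply/rowP => j; rewrite !mxE.
Qed.

Lemma HbX_diag (mb : 'rV[F]_n) X : (forall xi j, xi \in X -> mb 0 j - xi != 0) ->
  HbX (diag_mx mb) X = diag_mx (\row_j (hfun X (mb 0 j))^-1).
Proof.
move=> mbX; rewrite /HbX.
rewrite (eq_big_seq (fun xi => diag_mx (\row_j ((mb 0 j + xi) / (mb 0 j - xi))))).
  rewrite big_mulmx_diag; congr diag_mx; apply/rowP => j; rewrite !mxE /hfun -prodfV.
  by apply: eq_bigr => xi _; rewrite mxE invf_div.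
move=> xi xiX; rewrite /Hbmat diag_mx_subC diag_mx_addC invmx_diag => [|j]; last first.
  by rewrite mxE mbX.
by rewrite mulmx_diag; congr diag_mx; apply/rowP => j; rewrite !mxE.
Qed.
End DiagonalFactors.

Lemma admissible_neq0 (F : fieldType) n (m mb : 'rV[F]_n) z : admissible m mb z ->
  forall j, [/\ m 0 j + z != 0, mb 0 j - z != 0 & mb 0 j + z != 0].
Proof.
move=> adm j; have [_ [zm [zmb zmb']]] := adm j.
by rewrite subr_eq0 ![_ + z]addrC !addr_eq0 [mb 0 j == z]eq_sym; split; apply/eqP.
Qed.

Section InvertibleCase.
Variables (F : fieldType) (n : nat) (m mb : 'rV[F]_n) (alpha alphab : 'cV[F]_n).
Variables (a ab : 'rV[F]_n) (A Ab : 'M[F]_n).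
Hypothesis hA : diag_mx mb *m A - A *m diag_mx m = alpha *m a.
Hypothesis hAb : diag_mx m *m Ab - Ab *m diag_mx mb = alphab *m ab.
Hypothesis B_unit : 1%:M + A *m Ab \in unitmx.

Let B := 1%:M + A *m Ab.
Let S := Ab *m invmx B.
Let p := alphab - S *m A *m alphab.
Let q := ab *m invmx B.

Lemma S_displacement :
  diag_mx m *m S - S *m diag_mx mb = p *m q - (S *m alpha) *m (a *m S).
Proof.
set D := diag_mx m; set Db := diag_mx mb.
pose Z := alpha *m (a *m Ab) + A *m alphab *m ab.
have DbB : Db *m B - B *m Db = Z.
  have DbA : Db *m A = alpha *m a + A *m D by rewrite -hA subrK.
  have AbDb : Ab *m Db = D *m Ab - alphab *m ab by rewrite -hAb opprB addrC subrK.
  rewrite /B mulmxDr mulmxDl mulmx1 mul1mx mulmxA DbA -!mulmxA AbDb.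
  rewrite mulmxDl mulmxBr /Z !mulmxA.
  by rewrite opprD addrACA subrr add0r opprB addrCA addrK addrC.
have BV_Db : invmx B *m Db = Db *m invmx B + invmx B *m Z *m invmx B.
  rewrite -DbB mulmxBr mulmxBl !mulmxA mulVmx // mul1mx -!mulmxA mulmxV // mulmx1.
  by rewrite addrC subrK.
rewrite /S -mulmxA BV_Db mulmxDr !mulmxA -mulmxBl opprD addrA -mulmxBl hAb /Z /p.
by rewrite !(mulmxDr, mulmxDl, mulmxBl, mulmxBr, mulNmx) !mulmxA opprD addrA addrAC.
Qed.

Definition arow s : 'rV[F]_n := \row_j (a 0 j / (m 0 j + s)).
Definition acol c : 'cV[F]_n := \col_i (alpha i 0 / (mb 0 i - c)).
Definition miwa_phi s := (arow s *m S *m alpha) 0 0.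
Definition miwa_psi c := (a *m S *m acol c) 0 0.
Definition miwa_P s := (arow s *m p) 0 0.
Definition miwa_Q c := (q *m acol c) 0 0.

Lemma cauchy_entry_kernel s c : (forall j, m 0 j + s != 0) -> (forall i, mb 0 i - c != 0) ->
  (s + c) * (arow s *m S *m acol c) 0 0
  = miwa_kernel miwa_phi miwa_psi miwa_P miwa_Q s c.
Proof.
move=> ms mbc.
have aD : arow s *m (diag_mx m + s%:M) = a.
  by rewrite diag_mx_addC mul_mx_diag; apply/rowP => j; rewrite !mxE divfK.
have Dalpha : (diag_mx mb - c%:M) *m acol c = alpha.
  by rewrite diag_mx_subC mul_diag_mx; apply/colP => i; rewrite !mxE mulrC divfK.
pose f M := (arow s *m M *m acol c) 0 0.
have f_psi : f ((diag_mx m + s%:M) *m S) = miwa_psi c by rewrite /f mulmxA aD.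
have f_phi : f (S *m (diag_mx mb - c%:M)) = miwa_phi s.
  by rewrite /f mulmxA -mulmxA Dalpha.
have fB M1 M2 : f (M1 - M2) = f M1 - f M2.
  by rewrite /f mulmxBr mulmxBl; move: (_ *m M1 *m _) (_ *m M2 *m _) => X Y; rewrite !mxE.
have f_rank1 (u : 'cV_n) (v : 'rV_n) :
    f (u *m v) = (arow s *m u) 0 0 * (v *m acol c) 0 0.
  by rewrite /f !mulmxA -(mulmxA _ v) [LHS]mxE big_ord1.
have -> : (s + c) * (arow s *m S *m acol c) 0 0 = f ((s + c) *: S).
  by rewrite /f -scalemxAr -scalemxAl [RHS]mxE.
have -> : (s + c) *: S = (diag_mx m + s%:M) *m S - S *m (diag_mx mb - c%:M)
                         - (diag_mx m *m S - S *m diag_mx mb).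
  rewrite mulmxDl mulmxBr mul_scalar_mx mul_mx_scalar scalerDl.
  move: (s *: S) (c *: S) (diag_mx m *m S) (S *m diag_mx mb) => x y u v.
  by apply/matrixP => i j; rewrite !mxE; ring.
rewrite S_displacement !fB f_psi f_phi !f_rank1 /miwa_kernel /miwa_phi /miwa_psi.
by rewrite /miwa_P /miwa_Q !mulmxA; ring.
Qed.

Variable X : seq F.
Hypothesis uX : uniq X.
Hypothesis X_adm : forall xi, xi \in X -> admissible m mb xi.

Definition lowrankV : 'M_(size X, n) := \matrix_(l < size X) arow X`_l.
Definition lowrankU : 'M_(n, size X) :=
  \matrix_(i, l) ((hfun X (mb 0 i))^-1 * hfun_res X X`_l * alpha i 0 / (mb 0 i + X`_l)).

Lemma HbX_A_HX_lowrank :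
  diag_mx (\row_i (hfun X (mb 0 i))^-1) *m A *m diag_mx (\row_j hfun X (m 0 j))
  = A + lowrankU *m lowrankV.
Proof.
apply/matrixP => i j; rewrite mul_mx_diag mul_diag_mx !mxE.
have Aij : (mb 0 i - m 0 j) * A i j = alpha i 0 * a 0 j.
  move: hA; rewrite mul_mx_diag mul_diag_mx => /matrixP/(_ i j).
  by rewrite !mxE big_ord1 => <-; ring.
set s := mb 0 i; set t := m 0 j.
have sB xi : xi \in X -> s - xi != 0 by case/X_adm/admissible_neq0/(_ i).
have sD xi : xi \in X -> s + xi != 0 by case/X_adm/admissible_neq0/(_ i).
have tD xi : xi \in X -> t + xi != 0 by case/X_adm/admissible_neq0/(_ j).
have hs0 : hfun X s != 0.
  by rewrite prodf_seq_neq0; apply/allP => xi xiX; rewrite mulf_neq0 ?invr_eq0 ?sB ?sD.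
set Sigma := \sum_(x <- X) hfun_res X x / ((s + x) * (t + x)).
have -> : \sum_l lowrankU i l * lowrankV l j = (hfun X s)^-1 * (alpha i 0 * a 0 j) * Sigma.
  rewrite /Sigma (big_nth 0) big_mkord mulr_sumr; apply: eq_bigr => l _.
  have Xl : X`_l \in X by rewrite mem_nth.
  by rewrite !mxE -/s -/t; field; rewrite sD ?tD.
rewrite -[hfun X t](subrK (hfun X s)) (hfunB uX sD tD) -/Sigma.
transitivity ((hfun X s)^-1 * hfun X s * A i j + (hfun X s)^-1 * ((s - t) * A i j) * Sigma).
  by ring.
by rewrite Aij mulVf // mul1r.
Qed.

Lemma tauX_lowrank :
  tauX (diag_mx m) (diag_mx mb) A Ab X = \det B * \det (1%:M + lowrankV *m S *m lowrankU).
Proof.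
have mD xi j : xi \in X -> m 0 j + xi != 0 by case/X_adm/admissible_neq0/(_ j).
have mbB xi j : xi \in X -> mb 0 j - xi != 0 by case/X_adm/admissible_neq0/(_ j).
rewrite /tauX HX_diag // HbX_diag // det_add1_mulmxC !mulmxA HbX_A_HX_lowrank.
by rewrite mulmxDl addrA -[lowrankU *m _ *m _]mulmxA (det_add_mulmx _ _ B_unit) ?mulmxA.
Qed.

Lemma lowrank_entry l l' : (lowrankV *m S *m lowrankU) l l'
  = reduced_entry X (miwa_kernel miwa_phi miwa_psi miwa_P miwa_Q) l l'.
Proof.
have Xl : X`_l \in X by rewrite mem_nth.
have Xl' : X`_l' \in X by rewrite mem_nth.
have rowcol (M : 'M_(size X, n)) (N : 'M_(n, size X)) :
    (M *m N) l l' = (row l M *m col l' N) 0 0.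
  by rewrite !mxE; apply: eq_bigr => k _; rewrite !mxE.
rewrite rowcol row_mul rowK.
have -> : col l' lowrankU
    = \sum_(y <- X) (hfunV_coef X X`_l' y * \prod_(xi <- X) (y + xi)) *: acol y.
  apply/colP => i; rewrite summxE !mxE.
  have mbB xi : xi \in X -> mb 0 i - xi != 0 by case/X_adm/admissible_neq0/(_ i).
  have mbD xi : xi \in X -> mb 0 i + xi != 0 by case/X_adm/admissible_neq0/(_ i).
  rewrite mulrAC (hfunV_expand uX Xl' mbB mbD) mulr_suml; apply: eq_bigr => y _.
  by rewrite !mxE; ring.
rewrite mulmx_sumr summxE; apply: eq_big_seq => y yX.
have mD j : m 0 j + X`_l != 0 by case/X_adm/admissible_neq0/(_ j): Xl.
have mbB i : mb 0 i - y != 0 by case/X_adm/admissible_neq0/(_ i): yX.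
rewrite -scalemxAr mxE (bigD1_seq X`_l) //= -(cauchy_entry_kernel mD mbB); ring.
Qed.

Lemma tauX_reduced : tauX (diag_mx m) (diag_mx mb) A Ab X
  = \det B * reduced_tau X (miwa_kernel miwa_phi miwa_psi miwa_P miwa_Q).
Proof.
rewrite tauX_lowrank /reduced_tau.
by congr (_ * \det (1%:M + _)); apply/matrixP => l l'; rewrite lowrank_entry mxE.
Qed.
End InvertibleCase.

Lemma tauX_nil (F : fieldType) n (M Mb A Ab : 'M[F]_n) :
  tauX M Mb A Ab [::] = \det (1%:M + A *m Ab).
Proof. by rewrite /tauX /HX /HbX !big_nil !mulmx1. Qed.

Lemma miwa_invertible (F : fieldType) n (m mb : 'rV[F]_n) (alpha alphab : 'cV[F]_n)
    (a ab : 'rV[F]_n) (A Ab : 'M[F]_n) (x y z : F) :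
  diag_mx mb *m A - A *m diag_mx m = alpha *m a ->
  diag_mx m *m Ab - Ab *m diag_mx mb = alphab *m ab ->
  1%:M + A *m Ab \in unitmx ->
  admissible m mb x -> admissible m mb y -> admissible m mb z ->
  x != y -> x != z -> y != z ->
  let tau := tauX (diag_mx m) (diag_mx mb) A Ab in
  tau [::] * tau [:: x; y; z] =
    Gam x y z * tau [:: x] * tau [:: y; z]
  + Gam y x z * tau [:: y] * tau [:: x; z]
  + Gam z x y * tau [:: z] * tau [:: x; y].
Proof.
move=> hA hAb B_unit hx hy hz xy xz yz tau.
pose K := miwa_kernel (miwa_phi m alpha a A Ab) (miwa_psi mb alpha a A Ab)
                     (miwa_P m alphab a A Ab) (miwa_Q mb alpha ab A Ab).
have red X : uniq X -> all (mem [:: x; y; z]) X ->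
    tauX (diag_mx m) (diag_mx mb) A Ab X = \det (1%:M + A *m Ab) * reduced_tau X K.
  by move=> uX /allP sX; apply: tauX_reduced => // xi /sX; rewrite !inE => /or3P[] /eqP->.
rewrite /tau tauX_nil !red /= ?inE ?eqxx ?orbT ?negb_or ?xy ?xz ?yz //.
rewrite (reduced_tau_miwa _ _ _ _ xy xz yz); ring.
Qed.

Lemma char_poly_opp_horner (R : comNzRingType) n (N : 'M[R]_n) (l : R) :
  (char_poly (- N)).[l] = \det (l%:M + N).
Proof.
rewrite /char_poly -horner_evalE -det_map_mx; congr (\det _); apply/matrixP => i j.
by rewrite !mxE /= ?horner_evalE hornerD hornerN hornerMn hornerX hornerC opprK.
Qed.

Lemma poly_eq0_cofinite (R : numDomainType) (p q : {poly R}) :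
  q != 0 -> (forall x, q.[x] != 0 -> p.[x] = 0) -> p = 0.
Proof.
move=> q0 pq; have : q * p = 0.
  apply: (roots_geq_poly_eq0 (rs := [seq i%:R | i <- iota 0 (size (q * p))])).
  - apply/allP => _ /mapP[i _ ->]; rewrite /root hornerM.
    by have [->|/pq ->] := eqVneq q.[i%:R] 0; rewrite ?mul0r ?mulr0.
  - by rewrite map_inj_uniq ?iota_uniq // => i j /eqP; rewrite eqr_nat => /eqP.
  - by rewrite size_map size_iota.
by move/eqP; rewrite mulf_eq0 (negPf q0) => /eqP.
Qed.

Definition tau_shift (F : fieldType) n (M Mb A Ab : 'M[F]_n) (l : F) X :=
  \det (l%:M + A *m HX M X *m Ab *m HbX Mb X).

Lemma tau_shiftE (F : fieldType) n (M Mb A Ab : 'M[F]_n) l X : l != 0 ->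
  tau_shift M Mb A Ab l X = l ^+ n * tauX M Mb (l^-1 *: A) Ab X.
Proof.
move=> l0; have one : 1%:M = l^-1 *: (l%:M : 'M_n) by rewrite scale_scalar_mx mulVf.
by rewrite /tauX -!scalemxAl one -scalerDr detZ mulrA -exprMn divff // expr1n mul1r.
Qed.

Lemma miwa_shifted (F : fieldType) n (m mb : 'rV[F]_n) (alpha alphab : 'cV[F]_n)
    (a ab : 'rV[F]_n) (A Ab : 'M[F]_n) (x y z l : F) :
  diag_mx mb *m A - A *m diag_mx m = alpha *m a ->
  diag_mx m *m Ab - Ab *m diag_mx mb = alphab *m ab ->
  admissible m mb x -> admissible m mb y -> admissible m mb z ->
  x != y -> x != z -> y != z ->
  l != 0 -> tau_shift (diag_mx m) (diag_mx mb) A Ab l [::] != 0 ->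
  let f := tau_shift (diag_mx m) (diag_mx mb) A Ab l in
  f [::] * f [:: x; y; z] =
    Gam x y z * f [:: x] * f [:: y; z]
  + Gam y x z * f [:: y] * f [:: x; z]
  + Gam z x y * f [:: z] * f [:: x; y].
Proof.
move=> hA hAb hx hy hz xy xz yz l0 f0 f.
have hA' : diag_mx mb *m (l^-1 *: A) - (l^-1 *: A) *m diag_mx m = (l^-1 *: alpha) *m a.
  by rewrite -scalemxAr -!scalemxAl -scalerBr hA.
have B_unit : 1%:M + l^-1 *: A *m Ab \in unitmx.
  move: f0; rewrite tau_shiftE // tauX_nil unitmxE unitfE.
  by rewrite mulf_eq0 negb_or => /andP[].
have /= miwa := miwa_invertible hA' hAb B_unit hx hy hz xy xz yz.
by rewrite /f !tau_shiftE // mulrACA miwa; ring.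
Qed.

Unset Implicit Arguments.

Theorem proposition1 (R : realFieldType) (N : nat)
  (m mb : 'rV[R]_N) (alpha alphab : 'cV[R]_N) (a ab : 'rV[R]_N)
  (A Ab : 'M[R]_N)
  (hA : diag_mx mb *m A - A *m diag_mx m = alpha *m a)
  (hAb : diag_mx m *m Ab - Ab *m diag_mx mb = alphab *m ab)
  (x y z : R)
  (hx : admissible m mb x) (hy : admissible m mb y) (hz : admissible m mb z)
  (hxy : x != y) (hxz : x != z) (hyz : y != z) :
  let tau := tauX (diag_mx m) (diag_mx mb) A Ab in
  tau [::] * tau [:: x; y; z] =
    Gam x y z * tau [:: x] * tau [:: y; z]
  + Gam y x z * tau [:: y] * tau [:: x; z]
  + Gam z x y * tau [:: z] * tau [:: x; y].
Proof.
move=> tau.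
pose cp X := char_poly (- (A *m HX (diag_mx m) X *m Ab *m HbX (diag_mx mb) X)).
have cpE X l : (cp X).[l] = tau_shift (diag_mx m) (diag_mx mb) A Ab l X.
  exact: char_poly_opp_horner.
pose D := cp [::] * cp [:: x; y; z]
  - ((Gam x y z)%:P * cp [:: x] * cp [:: y; z] + (Gam y x z)%:P * cp [:: y] * cp [:: x; z]
     + (Gam z x y)%:P * cp [:: z] * cp [:: x; y]).
suff /(congr1 (horner^~ 1)) : D = 0.
  by rewrite /D !hornerE !cpE => /eqP; rewrite subr_eq0 => /eqP.
apply: (@poly_eq0_cofinite _ _ ('X * cp [::])).
  by rewrite mulf_neq0 ?polyX_eq0 ?monic_neq0 ?char_poly_monic.
move=> l; rewrite hornerM hornerX mulf_eq0 negb_or cpE => /andP[l0 f0].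
rewrite /D !hornerE !cpE (miwa_shifted hA hAb hx hy hz hxy hxz hyz l0 f0).
by rewrite subrr.
Qed.
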